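(* Let $(E,\mathcal{E},\nu)$ be a $\sigma$-finite measure space, $\phi$ a Young function satisfying the $\Delta_2$-condition, $w$ a weight function, and $\Psi:E\to E$ a non-singular measurable transformation inducing the composition operator $C_\Psi f=f\circ\Psi$ on the Orlicz-Lorentz space $L_{(\phi,w)}$. For $m\ge0$ let $\nu_m=\nu\circ\Psi^{-m}$. Then $\mathcal{A}(C_\Psi)=\infty$ if and only if the measures $\nu_m$ and $\nu_{m+1}$ are not equivalent for any natural number $m$.
   Context: A Young function is a convex $\phi:[0,\infty)\to[0,\infty)$ with $\phi(x)=0\iff x=0$ and $\lim_{x\to\infty}\phi(x)=\infty$; $\Delta_2$-condition: $\phi(2x)\le k\phi(x)$ for some $k>0$ and all $x>0$. A weight function is a non-increasing locally integrable $w:(0,\infty)\to(0,\infty)$ with $\int_0^\infty w=\infty$. For measurable $f$, $\nu_f(s)=\nu\{|f|>s\}$, $f^*(t)=\inf\{s>0:\nu_f(s)\le t\}$; $L_{(\phi,w)}$ is the space of measurable $f:E\to\mathbb{C}$ with $\int_0^\infty\phi(\alpha f^*(t))w(t)\,dt<\infty$ for some $\alpha>0$, with the Luxemburg norm. $\Psi$ non-singular: $\nu(\Psi^{-1}(S))=0$ whenever $\nu(S)=0$; $\nu\circ\Psi^{-m}(S)=\nu(\Psi^{-m}(S))$, $\Psi^0=\mathrm{id}$. Measures $\nu_1,\nu_2$ are equivalent if $\nu_1\ll\nu_2\ll\nu_1$. The ascent $\mathcal{A}(T)$ is the smallest integer $m$ with $\mathcal{N}(T^m)=\mathcal{N}(T^{m+1})$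 ($\mathcal{N}$ = kernel), and $\infty$ if no such $m$ exists. *)

From HB Require Import structures.
From mathcomp Require Import all_boot all_order all_algebra.
From mathcomp Require Import all_classical all_reals all_analysis.
From mathcomp Require Import complex.
Set Implicit Arguments. Unset Strict Implicit. Unset Printing Implicit Defensive.
Import Order.TTheory GRing.Theory Num.Theory.
Local Open Scope classical_set_scope.
Local Open Scope ring_scope.

Section OrliczLorentz.
Context {d : measure_display} {T : measurableType d} {R : realType}.

Definition measurable_C (f : T -> R[i]) : Prop :=
  measurable_fun setT (fun x => complex.Re (f x)) /\
  measurable_fun setT (fun x => complex.Im (f x)).

Definition distrib (nu : set T -> \bar R) (f : T -> R[i]) (s : R) : \bar R :=
  nu [set x | s < Normc.normc (f x)].

(* decreasing rearrangement f^*(t) = inf {s > 0 : nu_f(s) <= t} (= +oo if empty) *)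
Definition rearr (nu : set T -> \bar R) (f : T -> R[i]) (t : R) : \bar R :=
  ereal_inf ((fun s => s%:E) @` [set s : R | 0 < s /\ (distrib nu f s <= t%:E)%E]).

Definition phibar (phi : R -> R) (x : \bar R) : \bar R :=
  match x with
  | EFin r => (phi r)%:E
  | +oo%E => +oo%E
  | -oo%E => 0%E
  end.

Definition in_OL (nu : set T -> \bar R) (phi w : R -> R) (f : T -> R[i]) : Prop :=
  measurable_C f /\
  exists alpha : R, 0 < alpha /\
    (\int[@lebesgue_measure R]_(t in `]0%R, +oo[%classic)
        (phibar phi (alpha%:E * rearr nu f t) * (w t)%:E) < +oo)%E.

Definition kerC (nu : {measure set T -> \bar R}) (phi w : R -> R)
  (Psi : T -> T) (m : nat) : set (T -> R[i]) :=
  [set f | in_OL nu phi w f /\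
     {ae nu, forall x, iter m (fun g : T -> R[i] => g \o Psi) f x = 0}].

Definition nu_iter (nu : set T -> \bar R) (Psi : T -> T) (m : nat) : set T -> \bar R :=
  fun A => nu ((iter m Psi) @^-1` A).

End OrliczLorentz.

Definition meas_equiv {d : measure_display} {T : measurableType d} {R : realType}
  (m1 m2 : set T -> \bar R) : Prop := m1 `<< m2 /\ m2 `<< m1.

Lemma ex_asbool_nat (P : nat -> Prop) : (exists m, P m) -> exists m, `[< P m >].
Proof. by move=> [m Pm]; exists m; apply/asboolP. Qed.

(* ascent: smallest m with N(T^m) = N(T^(m+1)); None encodes infinity *)
Definition ascent {U : Type} (K : nat -> set U) : option nat :=
  match pselect (exists m, K m = K m.+1) with
  | left h => Some (ex_minn (ex_asbool_nat h))
  | right _ => None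
  end.

From HB Require Import structures.
From mathcomp Require Import all_boot all_order all_algebra.
From mathcomp Require Import all_classical all_reals all_analysis.
From mathcomp Require Import complex measurable_realfun.
Import Order.TTheory GRing.Theory Num.Theory.
Local Open Scope classical_set_scope.
Local Open Scope ring_scope.

(* Since (C_Psi)^m f = f o Psi^m, a function f of L_(phi,w) lies in the kernel
   of (C_Psi)^m exactly when its support is nu_m-null.  Non-singularity gives
   nu_(m+1) << nu_m, so N(C^m) is always contained in N(C^(m+1)), with equality
   as soon as nu_m << nu_(m+1).  Conversely, indicators of sets of finite
   measure belong to L_(phi,w) (phi(0) = 0 and w is locally integrable), and by
   sigma-finiteness they detect every set that is not nu_m-null; so equal
   kernels force nu_m << nu_(m+1).  Hence N(C^m) = N(C^(m+1)) iff nu_m and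
   nu_(m+1) are equivalent, and the ascent is infinite iff this never happens. *)

Lemma iter_comp_apply (T U : Type) (Psi : T -> T) m (f : T -> U) x :
  iter m (fun g => g \o Psi) f x = f (iter m Psi x).
Proof. by elim: m f x => // m IH f x; rewrite iterS /= IH -iterSr. Qed.

Section preimage.
Context {d : measure_display} {T : measurableType d}.

Lemma measurable_fun_iter (Psi : T -> T) m :
  measurable_fun setT Psi -> measurable_fun setT (iter m Psi).
Proof.
by move=> mPsi; elim: m => [|m IH]; [exact: measurable_id|exact: measurableT_comp].
Qed.

Lemma sigma_finite_preimage_null {R : realType} (nu : {measure set T -> \bar R})
    (g : T -> T) (A : set T) :
  sigma_finite setT nu -> measurable_fun setT g -> measurable A ->
  (forall B, measurable B -> B `<=` A -> (nu B < +oo)%E ->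
     nu (g @^-1` B) = 0%E) ->
  nu (g @^-1` A) = 0%E.
Proof.
move=> [F FT mF] mg mA nullB.
have mgA : measurable (g @^-1` A) by rewrite -[X in measurable X]setTI; exact: mg.
apply/(measure_negligible mgA)/(@negligibleS _ _ _ _ (\bigcup_k g @^-1` (A `&` F k))).
  move=> x Ax; have : setT (g x) by [].
  by rewrite FT => -[k _ Fk]; exists k.
apply: negligible_bigcup => k.
have mAF : measurable (A `&` F k) by apply: measurableI => //; exact: (mF k).1.
apply/negligibleP; first by rewrite -[X in measurable X]setTI; exact: mg.
apply: nullB => //; apply: (le_lt_trans _ (mF k).2).
by rewrite le_measure ?inE //; exact: (mF k).1.
Qed.

End preimage.

Lemma ascent_eq_None (U : Type) (K : nat -> set U) :
  ascent K = None <-> forall m, K m <> K m.+1.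
Proof.
rewrite /ascent; case: pselect => [[m Km]|noK]; split => // noK'.
- by case: (noK' m).
- by move=> m Km; apply: noK; exists m.
Qed.

Lemma integrable_indic_weight (R : realType) (w : R -> R) (c a : R) :
  (forall t, 0 < t ->
     (@lebesgue_measure R).-integrable `]0%R, t]%classic (fun x => (w x)%:E)) ->
  0 <= a ->
  (@lebesgue_measure R).-integrable `]0%R, +oo[%classic
    (fun t => (c * \1_(`]-oo, a[%classic) t * w t)%:E).
Proof.
move=> wint a0; set h := (X in _.-integrable _ X).
have a1 : 0 < a + 1 by rewrite ltr_wpDl.
apply/(integrable_mkcond h (measurable_itv _)).2.
rewrite (_ : h \_ _ = h \_ `]0, a + 1]%classic); last first.
  apply/funext => t; rewrite /patch !mem_setE !in_itv /= andbT.
  case: (ltrP 0 t) => //= _; case: (lerP t (a + 1)) => // at1.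
  rewrite /h indicE mem_setE in_itv /= ltNge ltW ?mulr0 ?mul0r //.
  by rewrite (le_lt_trans _ at1) // lerDl.
apply/(integrable_mkcond h (measurable_itv _)).1.
have wc : (@lebesgue_measure R).-integrable `]0, a + 1]%classic
    (fun t => c%:E * (w t)%:E)%E.
  by apply: integrableZl; [exact: measurable_itv | exact: wint].
apply: (le_integrable _ _ _ wc); first exact: measurable_itv.
- apply/measurable_EFinP/measurable_funM; last first.
    by apply/measurable_EFinP; have /integrableP[] := wint _ a1.
  by apply: measurable_funM => //; exact: measurable_indic.
- move=> t _; rewrite -EFinM !abse_EFin lee_fin indicE.
  by case: (_ \in _); rewrite ?mulr1 ?mulr0 ?mul0r ?normr0 ?normr_ge0.
Qed.

Section complex_valued.
Context {d : measure_display} {T : measurableType d} {R : realType}.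
Variable nu : {measure set T -> \bar R}.

Lemma measurable_C_support (f : T -> R[i]) :
  measurable_C f -> measurable (f @^-1` [set~ 0]).
Proof.
move=> [mRe mIm].
have -> : f @^-1` [set~ 0] = ~` ((fun x => complex.Re (f x)) @^-1` [set 0] `&`
                                  (fun x => complex.Im (f x)) @^-1` [set 0]).
  apply/seteqP; split => x /=.
    by move=> fx0 [Re0 Im0]; apply: fx0; move: Re0 Im0; case: (f x) => ? ? /= -> ->.
  by move=> nRI fx0; apply: nRI; rewrite fx0.
apply/measurableC/measurableI.
  by rewrite -[X in measurable X]setTI; apply: mRe => //; exact: measurable_set1.
by rewrite -[X in measurable X]setTI; apply: mIm => //; exact: measurable_set1.
Qed.

Definition indicC (B : set T) : T -> R[i] := fun x => Complex (\1_B x) 0.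

Lemma normc_indicC B x : Normc.normc (indicC B x) = \1_B x.
Proof.
rewrite /Normc.normc /= expr0n addr0 indicE.
by case: (x \in B); rewrite ?expr1n ?sqrtr1 ?expr0n ?sqrtr0.
Qed.

Lemma distrib_indicC B s :
  0 < s -> distrib nu (indicC B) s = if s < 1 then nu B else 0%E.
Proof.
move=> s0; have lt_indic x : (s < \1_B x) = (x \in B) && (s < 1).
  by rewrite indicE; case: (x \in B) => //=; rewrite ltNge (ltW s0).
rewrite /distrib; under eq_set do rewrite normc_indicC lt_indic.
case: ifPn => _.
  congr (nu _); apply/seteqP; split => x /=; rewrite andbT.
  - exact: set_mem.
  - exact: mem_set.
by rewrite -(measure0 nu); congr (nu _); apply/seteqP; split => x //=; rewrite andbF.
Qed.

Lemma rearr_indicC B a t : nu B = a%:E -> 0 < t ->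
  rearr nu (indicC B) t = (\1_(`]-oo, a[%classic) t)%:E.
Proof.
move=> nuB t0; rewrite /rearr indicE mem_setE in_itv /=; case: (boolP (t < a)) => ta.
  apply/le_anti/andP; split.
    apply: ereal_inf_lbound; exists 1 => //; split => //.
    by rewrite distrib_indicC // ltxx lee_fin ltW.
  apply: le_ereal_inf_tmp => _ [s [s0 hs] <-]; rewrite lee_fin; move: hs.
  rewrite distrib_indicC //; case: ifPn => [_|]; last by rewrite -leNgt.
  by rewrite nuB lee_fin leNgt ta.
apply/le_anti/andP; split.
  apply/lee_addgt0Pr => e e0; rewrite add0e; apply: ereal_inf_lbound.
  exists e => //; split => //; rewrite distrib_indicC //; case: ifPn => _.
    by rewrite nuB lee_fin leNgt.
  by rewrite lee_fin ltW.
by apply: le_ereal_inf_tmp => _ [s [s0 _] <-]; rewrite lee_fin ltW.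
Qed.

Lemma in_OL_indicC (phi w : R -> R) B :
  phi 0 = 0 ->
  (forall t, 0 < t ->
     (@lebesgue_measure R).-integrable `]0%R, t]%classic (fun x => (w x)%:E)) ->
  measurable B -> (nu B < +oo)%E -> in_OL nu phi w (indicC B).
Proof.
move=> phi0 wint mB nuB_fin; split.
  by split; [exact: measurable_indic | exact: measurable_cst].
set a := fine (nu B).
have nuB : nu B = a%:E by rewrite fineK // ge0_fin_numE // measure_ge0.
have a0 : 0 <= a by rewrite /a fine_ge0 // measure_ge0.
exists 1; split => //.
have -> : (\int[@lebesgue_measure R]_(t in `]0%R, +oo[%classic)
    (phibar phi (1%:E * rearr nu (indicC B) t) * (w t)%:E) =
  \int[@lebesgue_measure R]_(t in `]0%R, +oo[%classic)
    (phi 1 * \1_(`]-oo, a[%classic) t * w t)%:E)%E.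
  apply: eq_integral => t; rewrite mem_setE in_itv /= andbT => t0.
  rewrite mul1e (rearr_indicC _ _ _ nuB t0) indicE.
  by case: (_ \in _); rewrite /= ?mulr1 ?mulr0 ?mul0r ?phi0 ?mul0e -?EFinM.
apply: integrable_lty; first exact: measurable_itv.
exact: integrable_indic_weight.
Qed.

Lemma support_indicC B : indicC B @^-1` [set~ 0] = B.
Proof.
apply/seteqP; split => x; rewrite /indicC /= indicE.
  by case: (boolP (x \in B)) => [/set_mem|_] //= []; apply/eqP.
by move/mem_set => -> /= [] /eqP; rewrite oner_eq0.
Qed.

End complex_valued.

Section kernel.
Context {d : measure_display} {T : measurableType d} {R : realType}.
Variables (nu : {measure set T -> \bar R}) (phi w : R -> R) (Psi : T -> T).
Hypothesis mPsi : measurable_fun setT Psi.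
Hypothesis nonsingular :
  forall S, measurable S -> nu S = 0%E -> nu (Psi @^-1` S) = 0%E.

Let measurable_preimage_iter m A :
  measurable A -> measurable (iter m Psi @^-1` A).
Proof.
by move=> mA; rewrite -[X in measurable X]setTI; exact: measurable_fun_iter.
Qed.

Lemma nu_iter_null_setP m A :
  measurable A -> (nu_iter nu Psi m).-null_set A <-> nu_iter nu Psi m A = 0%E.
Proof.
move=> mA; split=> [/(_ A mA (@subset_refl _ A)) //|A0 B mB BA].
have mB' := measurable_preimage_iter m B mB.
have mA' := measurable_preimage_iter m A mA.
by apply/eqP; rewrite -measure_le0 -A0 le_measure ?inE // => x /BA.
Qed.

Lemma nu_iter_dominatesP m n :
  nu_iter nu Psi m `<< nu_iter nu Psi n <->
  (forall A, measurable A -> nu_iter nu Psi n A = 0%E -> nu_iter nu Psi m A = 0%E).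
Proof.
split=> [dom A mA /(nu_iter_null_setP _ _ mA) /dom /(nu_iter_null_setP _ _ mA) //|].
by move=> dom N nullN B mB BN; exact/dom/nullN.
Qed.

Lemma nu_iter_succ_dominates m : nu_iter nu Psi m.+1 `<< nu_iter nu Psi m.
Proof.
apply/nu_iter_dominatesP => A mA A0; rewrite /nu_iter.
have -> : iter m.+1 Psi @^-1` A = Psi @^-1` (iter m Psi @^-1` A).
  by apply/funext => x; rewrite /preimage /= -iterSr.
exact/nonsingular/A0/measurable_preimage_iter.
Qed.

Lemma ae_iter_comp_eq0P m (f : T -> R[i]) : measurable_C f ->
  {ae nu, forall x, iter m (fun g => g \o Psi) f x = 0} <->
  nu_iter nu Psi m (f @^-1` [set~ 0]) = 0%E.
Proof.
move=> mf; have mS := measurable_preimage_iter m _ (measurable_C_support f mf).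
rewrite -(negligibleP _ mS).
have -> : iter m Psi @^-1` (f @^-1` [set~ 0]) =
    ~` [set x | iter m (fun g => g \o Psi) f x = 0].
  by apply/seteqP; split => x /=; rewrite iter_comp_apply.
by [].
Qed.

Lemma kerCE m f : kerC nu phi w Psi m f <->
  in_OL nu phi w f /\ nu_iter nu Psi m (f @^-1` [set~ 0]) = 0%E.
Proof.
by split=> -[Lf f0]; split=> //; apply/(ae_iter_comp_eq0P _ _ Lf.1).
Qed.

Lemma kerC_subset_succ m : kerC nu phi w Psi m `<=` kerC nu phi w Psi m.+1.
Proof.
move=> f /kerCE[Lf f0]; apply/kerCE; split=> //.
exact: (nu_iter_dominatesP _ _).1 (nu_iter_succ_dominates m) _
  (measurable_C_support f Lf.1) f0.
Qed.

Lemma kerC_succ_subset m : nu_iter nu Psi m `<< nu_iter nu Psi m.+1 ->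
  kerC nu phi w Psi m.+1 `<=` kerC nu phi w Psi m.
Proof.
move=> dom f /kerCE[Lf f0]; apply/kerCE; split=> //.
exact: (nu_iter_dominatesP _ _).1 dom _ (measurable_C_support f Lf.1) f0.
Qed.

Lemma kerC_succ_eqP m :
  sigma_finite setT nu -> phi 0 = 0 ->
  (forall t, 0 < t ->
     (@lebesgue_measure R).-integrable `]0%R, t]%classic (fun x => (w x)%:E)) ->
  kerC nu phi w Psi m = kerC nu phi w Psi m.+1 <->
  meas_equiv (nu_iter nu Psi m) (nu_iter nu Psi m.+1).
Proof.
move=> nu_sfin phi0 wint; split=> [kerE|[dom _]]; last first.
  by apply/seteqP; split; [exact: kerC_subset_succ|exact: kerC_succ_subset].
split; last exact: nu_iter_succ_dominates.
apply/nu_iter_dominatesP => A mA A0.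
apply: (sigma_finite_preimage_null _ _ _ nu_sfin (measurable_fun_iter _ m mPsi) mA).
move=> B mB BA nuB_fin.
have LB : in_OL nu phi w (indicC B) by exact: in_OL_indicC.
have : kerC nu phi w Psi m.+1 (indicC B).
  apply/kerCE; split=> //; rewrite support_indicC.
  exact: (nu_iter_null_setP _ _ mA).2 A0 B mB BA.
by rewrite -kerE => /kerCE[_]; rewrite support_indicC.
Qed.

End kernel.

Theorem theorem3p5 (d : measure_display) (T : measurableType d) (R : realType)
  (nu : {measure set T -> \bar R}) (phi w : R -> R) (Psi : T -> T) :
  sigma_finite setT nu ->
  (* phi is a Young function *)
  (forall x, 0 <= x -> 0 <= phi x) ->
  (forall x, 0 <= x -> (phi x = 0 <-> x = 0)) ->
  (forall x y l, 0 <= x -> 0 <= y -> 0 <= l <= 1 ->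
     phi (l * x + (1 - l) * y) <= l * phi x + (1 - l) * phi y) ->
  (forall M : R, exists N : R, forall x, N <= x -> M <= phi x) ->
  (* Delta_2 condition *)
  (exists k : R, 0 < k /\ forall x, 0 < x -> phi (2 * x) <= k * phi x) ->
  (* w is a weight function *)
  (forall t, 0 < t -> 0 < w t) ->
  (forall s t, 0 < s -> s <= t -> w t <= w s) ->
  (forall t, 0 < t ->
     (@lebesgue_measure R).-integrable `]0%R, t]%classic (fun x => (w x)%:E)) ->
  (\int[@lebesgue_measure R]_(t in `]0%R, +oo[%classic) (w t)%:E = +oo)%E ->
  (* Psi is a non-singular measurable transformation *)
  measurable_fun setT Psi ->
  (forall S, measurable S -> nu S = 0%E -> nu (Psi @^-1` S) = 0%E) ->
  (* C_Psi maps L_(phi,w) into itself *)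
  (forall f, in_OL nu phi w f -> in_OL nu phi w (f \o Psi)) ->
  (ascent (kerC nu phi w Psi) = None <->
   forall m : nat, ~ meas_equiv (nu_iter nu Psi m) (nu_iter nu Psi m.+1)).
Proof.
move=> nu_sfin _ phi_eq0 _ _ _ _ _ wint _ mPsi nonsingular _.
have phi0 : phi 0 = 0 by apply/(phi_eq0 0 (lexx _)).
have kerP m := kerC_succ_eqP _ _ _ _ mPsi nonsingular m nu_sfin phi0 wint.
by rewrite ascent_eq_None; split=> noK m /kerP; apply: noK.
Qed.
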